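(* Let $(X,\mathcal T,P,\leq,\{\sigma_x:x\in X\})$ be a typed topological space with $X$ finite. For any subset $D\subseteq X$ and any type $p\in P$ there exists a subset $port_p(D)\subseteq D$ such that (1) $D\subseteq p\vdash tr(port_p(D))$, and (2) for every two distinct points $z,w\in port_p(D)$, both $z\notin p\vdash tr(\{w\})$ and $w\notin p\vdash tr(\{z\})$.
   Context: A typed topological space $(X,\mathcal T,P,\leq,\{\sigma_x:x\in X\})$ consists of a topological space $(X,\mathcal T)$, a partially ordered set $(P,\leq)$ of types, and for each $x\in X$ a partial function $\sigma_x:\{O\in\mathcal T:x\in O\}\to P$ such that for all $U,V$ in its domain, $\sigma_x(U)\leq\sigma_x(V)$ iff $U\subseteq V$. $U$ is a type-$p$ neighborhood of $x$ if $U$ is in the domain of $\sigma_x$ and $\sigma_x(U)=p$. $x$ is a $p$-accumulation point of $A$ if every type-$p$ neighborhood of $x$ meets $A$. $p\vdash CL_1(A)=A\cup\{p\text{-accumulation points of }A\}$, $p\vdash CL_n(A)=p\vdash CL_1(p\vdash CL_{n-1}(A))$, $p\vdash tr(A)=\bigcup_{n\ge1}p\vdash CL_n(A)$. *)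

From mathcomp Require Import all_boot all_order.
Set Implicit Arguments. Unset Strict Implicit. Unset Printing Implicit Defensive.
Import Order.Theory.
Local Open Scope order_scope.

(* A topology on a finite type: a family of open sets containing set0, setT,
   closed under binary unions and intersections (for finite X, closure under
   binary unions is equivalent to closure under arbitrary unions). *)
Definition is_topology (X : finType) (T : {set {set X}}) : Prop :=
  [/\ set0 \in T, setT \in T,
      (forall U V, U \in T -> V \in T -> U :|: V \in T) &
      (forall U V, U \in T -> V \in T -> U :&: V \in T)].

(* sigma x is a partial function from open neighbourhoods of x to types P:
   sigma x U = None means U is not in the domain of sigma_x. *)
Definition is_typed_topology (X : finType) (d : Order.disp_t) (P : porderType d)
    (T : {set {set X}}) (sigma : X -> {set X} -> option P) : Prop :=
  [/\ is_topology T,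
      (forall x U p, sigma x U = Some p -> U \in T /\ x \in U) &
      (forall x U V p q, sigma x U = Some p -> sigma x V = Some q ->
         (p <= q) = (U \subset V))].

Definition CL1 (X : finType) (d : Order.disp_t) (P : porderType d)
    (sigma : X -> {set X} -> option P) (p : P) (A : {set X}) : {set X} :=
  A :|: [set x | [forall U : {set X}, (sigma x U == Some p) ==> (U :&: A != set0)]].

Definition CLn (X : finType) (d : Order.disp_t) (P : porderType d)
    (sigma : X -> {set X} -> option P) (p : P) (n : nat) (A : {set X}) : {set X} :=
  iter n (CL1 sigma p) A.

Definition in_tr (X : finType) (d : Order.disp_t) (P : porderType d)
    (sigma : X -> {set X} -> option P) (p : P) (A : {set X}) (x : X) : Prop :=
  exists n : nat, (1 <= n)%N /\ x \in CLn sigma p n A.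

(* Only two properties of CL_1 matter: it is extensive and monotone.  Hence
   "x ∈ p⊢tr({y})" is a preorder on X, and p⊢tr({w}) ⊆ p⊢tr(A) whenever w ∈ A.
   For a preorder on a finite set D, every point lies below a maximal element
   of D (take one whose up-set in D is smallest), and choosing a single
   representative from each class of maximal elements yields an antichain
   that dominates D. *)

From mathcomp Require Import all_boot all_order boolp.

Set Implicit Arguments. Unset Strict Implicit. Unset Printing Implicit Defensive.

Section FinitePreorder.
Variables (T : finType) (r : rel T).
Hypotheses (r_refl : reflexive r) (r_trans : transitive r).

Lemma exists_maximal_above (D : {set T}) x : x \in D ->
  exists2 m, m \in D & r x m /\ forall u, u \in D -> r m u -> r u m.
Proof.
move=> xD; pose up y := [set u in D | r y u].
have xDx : (x \in D) && r x x by rewrite xD r_refl.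
have [m /andP[mD xm] m_min] :=
  @arg_minnP _ x (fun y => (y \in D) && r x y) (fun y => #|up y|) xDx.
exists m => //; split=> // u uD mu.
have up_um : up u \subset up m.
  by apply/subsetP => v; rewrite !inE => /andP[-> /(r_trans mu)].
have /eqP up_eq : up u == up m.
  by rewrite eqEcard up_um m_min //= uD (r_trans xm mu).
have : m \in up u by rewrite up_eq inE mD r_refl.
by rewrite inE => /andP[].
Qed.

Definition top_reps (D : {set T}) : {set T} :=
  [set m in D | [forall u in D, r m u ==> r u m && (enum_rank m <= enum_rank u)%N]].

Lemma top_reps_sub (D : {set T}) : top_reps D \subset D.
Proof. by apply/subsetP => m; rewrite inE => /andP[]. Qed.

Lemma top_reps_antichain (D : {set T}) z w :
  z \in top_reps D -> w \in top_reps D -> r z w -> z = w.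
Proof.
rewrite !inE => /andP[zD /forall_inP z_top] /andP[wD /forall_inP w_top] zw.
have /andP[wz le_zw] := implyP (z_top w wD) zw.
have /andP[_ le_wz] := implyP (w_top z zD) wz.
by apply/enum_rank_inj/val_inj/anti_leq; rewrite le_zw le_wz.
Qed.

Lemma top_reps_cover (D : {set T}) x :
  x \in D -> exists2 w, w \in top_reps D & r x w.
Proof.
move=> xD; have [m mD [xm m_max]] := exists_maximal_above xD.
have mDm : (m \in D) && r m m by rewrite mD r_refl.
have [w /andP[wD mw] w_min] :=
  @arg_minnP _ m (fun u => (u \in D) && r m u) (fun u => enum_rank u : nat) mDm.
exists w; last exact: r_trans xm mw.
rewrite inE wD; apply/forall_inP => u uD; apply/implyP => wu.
have mu := r_trans mw wu.
by rewrite (r_trans (m_max u uD mu) mw) w_min ?uD.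
Qed.

End FinitePreorder.

Section Trace.
Variables (X : finType) (d : Order.disp_t) (P : porderType d)
  (sigma : X -> {set X} -> option P) (p : P).

Lemma CL1S (A B : {set X}) : A \subset B -> CL1 sigma p A \subset CL1 sigma p B.
Proof.
move=> AB; apply/subsetP => x; rewrite !inE => /orP[/(subsetP AB) -> //|].
move=> /forallP meetA; apply/orP; right; apply/forallP => U.
apply/implyP => /(implyP (meetA U)); apply: contraNneq => UB0.
by rewrite -subset0 -UB0 setIS.
Qed.

Lemma CLnS n (A B : {set X}) : A \subset B -> CLn sigma p n A \subset CLn sigma p n B.
Proof. by elim: n => //= n IHn AB; apply/CL1S/IHn. Qed.

Lemma in_trS (A B : {set X}) x :
  A \subset B -> in_tr sigma p A x -> in_tr sigma p B x.
Proof.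
by move=> AB [n [n_gt0 xA]]; exists n; split=> //; apply: subsetP (CLnS n AB) x xA.
Qed.

Lemma in_tr_set1 x : in_tr sigma p [set x] x.
Proof. by exists 1%N; split=> //; rewrite /CLn /= /CL1 !inE eqxx. Qed.

Lemma in_tr_trans (A : {set X}) x y :
  in_tr sigma p [set y] x -> in_tr sigma p A y -> in_tr sigma p A x.
Proof.
move=> [n [n_gt0 xy]] [m [m_gt0 yA]]; exists (n + m)%N; split.
  exact: leq_trans n_gt0 (leq_addr m n).
have y_sub : [set y] \subset CLn sigma p m A by rewrite sub1set.
by rewrite /CLn iterD; apply: subsetP (CLnS n y_sub) x xy.
Qed.

End Trace.

Theorem lemma3p5 (X : finType) (d : Order.disp_t) (P : porderType d)
    (T : {set {set X}}) (sigma : X -> {set X} -> option P) :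
  is_typed_topology T sigma ->
  forall (D : {set X}) (p : P),
    exists port : {set X},
      port \subset D /\
      (forall x, x \in D -> in_tr sigma p port x) /\
      (forall z w, z \in port -> w \in port -> z != w ->
         ~ in_tr sigma p [set w] z /\ ~ in_tr sigma p [set z] w).
Proof.
move=> _ D p.
pose r x y := `[< in_tr sigma p [set y] x >].
have r_refl : reflexive r by move=> x; apply/asboolP/in_tr_set1.
have r_trans : transitive r.
  by move=> y x z /asboolP xy /asboolP yz; apply/asboolP/(in_tr_trans xy yz).
exists (top_reps r D); split; first exact: top_reps_sub.
split=> [x /(top_reps_cover r_refl r_trans)[w wD /asboolP xw] | z w zD wD z_neq_w].
  by apply: in_trS xw; rewrite sub1set.
split=> [/asboolP zw | /asboolP wz]; move/eqP: z_neq_w; apply.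
  exact: top_reps_antichain zD wD zw.
by apply/esym/(top_reps_antichain wD zD).
Qed.
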